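(* Let $S$ be a finite pseudo-nilpotent semigroup. If $I$ is an ideal of $S$ such that $\mathcal{N}_I$ has no edges, then every element of $I$ is an isolated vertex of $\mathcal{N}_S$.
   Context: For a semigroup $S$, $S^1$ denotes $S$ with an identity adjoined (if $S$ has none). For $x,y\in S$ and $z_1,z_2,\ldots\in S^1$ define recursively $\lambda_0=x$, $\rho_0=y$, $\lambda_{n+1}=\lambda_n z_{n+1}\rho_n$, $\rho_{n+1}=\rho_n z_{n+1}\lambda_n$; write $\lambda_n(x,y,z_1,\ldots,z_n)$ and $\rho_n(x,y,z_1,\ldots,z_n)$. A semigroup $S$ is nilpotent (in the sense of Mal'cev) if there is a positive integer $n$ with $\lambda_n(a,b,c_1,\ldots,c_n)=\rho_n(a,b,c_1,\ldots,c_n)$ for all $a,b\in S$ and $c_1,\ldots,c_n\in S^1$. $\langle X\rangle$ denotes the subsemigroup generated by $X$. The upper non-nilpotent graph $\mathcal{N}_S$ has vertex set $S$, with an edge between $x$ and $y$ iff $\langle x,y\rangle$ is not nilpotent. The empty set is regarded as an ideal; for an ideal $I$ of $S$, $S/I$ is the Rees factor semigroup, with $S/\emptyset=S$. A semigroup $S$ is pseudo-nilpotent if the following holds: whenever $x,y\in S$, $w_1,\ldots,w_m\in S^1$, $T$ is the subsemigroup generated by $x,y$ and those $w_i$ lying in $S$, $I$ is an ideal (possibly empty) of $T$, and $t<m$ are non-negative integers such that, writing $\lambda_k=\lambda_k(x,y,w_1,\ldots,w_k)$ and $\rho_k=\rho_k(x,y,w_1,\ldots,w_k)$, one has $\lambda_t\neq\rho_t$,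 $(\lambda_t,\rho_t)=(\lambda_m,\rho_m)$ and $\lambda_m,\rho_m\notin I$, then for every $0\le i\le m$ there is an edge in $\mathcal{N}_{T/I}$ between (the images of) $\lambda_i$ and $\rho_i$. *)

From mathcomp Require Import all_boot.
Set Implicit Arguments. Unset Strict Implicit. Unset Printing Implicit Defensive.

(* A semigroup is modelled by a carrier type with a binary operation
   (associativity is assumed explicitly where needed).  Subsemigroups and
   subsets are predicates on the carrier. *)

(* Product a z b where z ranges over S^1: None is the adjoined identity. *)
Definition mul1 {A : Type} (op : A -> A -> A) (a : A) (z : option A) (b : A) : A :=
  match z with Some c => op (op a c) b | None => op a b end.

(* lamrho op x y z n = (lambda_n(x,y,z_1..z_n), rho_n(x,y,z_1..z_n));
   z k is z_k (indices from 1; z 0 unused). *)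
Fixpoint lamrho {A : Type} (op : A -> A -> A) (x y : A) (z : nat -> option A)
  (n : nat) : A * A :=
  match n with
  | 0 => (x, y)
  | n'.+1 => let p := lamrho op x y z n' in
             (mul1 op p.1 (z n) p.2, mul1 op p.2 (z n) p.1)
  end.

(* z is an element of P^1 (None = adjoined identity). *)
Definition in1 {A : Type} (P : A -> Prop) (z : option A) : Prop :=
  match z with Some c => P c | None => True end.

(* Mal'cev nilpotency of the semigroup with carrier P (closed under op). *)
Definition nilpotent {A : Type} (op : A -> A -> A) (P : A -> Prop) : Prop :=
  exists n, 0 < n /\
    forall (a b : A) (z : nat -> option A), P a -> P b ->
      (forall i, in1 P (z i)) ->
      (lamrho op a b z n).1 = (lamrho op a b z n).2.

Inductive gen {A : Type} (op : A -> A -> A) (X : A -> Prop) : A -> Prop :=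
  | gen_base a : X a -> gen op X a
  | gen_mul a b : gen op X a -> gen op X b -> gen op X (op a b).

Definition pair2 {A : Type} (x y : A) : A -> Prop := fun a => a = x \/ a = y.

(* Edge of the upper non-nilpotent graph: <x,y> is not nilpotent. *)
Definition nn_edge {A : Type} (op : A -> A -> A) (x y : A) : Prop :=
  ~ nilpotent op (gen op (pair2 x y)).

(* I is a (possibly empty) ideal of the semigroup with carrier P. *)
Definition is_ideal {T : finType} (op : T -> T -> T) (P : T -> Prop) (I : {set T}) : Prop :=
  (forall a, a \in I -> P a) /\
  (forall a s, a \in I -> P s -> op a s \in I /\ op s a \in I).

(* Rees factor by I: Some t represents t (t not in I), None represents the zero
   (the class I).  If I is empty, None never arises and this is a copy of the
   semigroup itself. *)
Definition reesop {T : finType} (op : T -> T -> T) (I : {set T})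
  (a b : option T) : option T :=
  match a, b with
  | Some a', Some b' => if op a' b' \in I then None else Some (op a' b')
  | _, _ => None
  end.

Definition rimg {T : finType} (I : {set T}) (t : T) : option T :=
  if t \in I then None else Some t.

Definition pseudo_nilpotent {T : finType} (op : T -> T -> T) : Prop :=
  forall (x y : T) (m : nat) (w : nat -> option T) (I : {set T}) (t : nat),
    let Tg := gen op (fun a => a = x \/ a = y \/ exists2 i, 0 < i <= m & w i = Some a) in
    let lr := lamrho op x y w in
    is_ideal op Tg I -> t < m ->
    (lr t).1 <> (lr t).2 -> lr t = lr m ->
    (lr m).1 \notin I -> (lr m).2 \notin I ->
    forall i, i <= m -> nn_edge (reesop op I) (rimg I (lr i).1) (rimg I (lr i).2).

From mathcomp Require Import all_boot.
From Stdlib Require Import Classical.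

Set Implicit Arguments.
Unset Strict Implicit.
Unset Printing Implicit Defensive.

(* Let x be in I and suppose <x, y> is not nilpotent.  A failing Mal'cev
   sequence of length |S x S| + 1 must repeat a pair, so pseudo-nilpotency
   (with the empty ideal) makes (lambda_1, rho_1) = (a c b, b c a) an edge of
   N_S, with a, b, c taken from <x, y>.  If one of a, b, c lies in I, both ends
   of this edge lie in I, contradicting the hypothesis on N_I.  Otherwise
   a, b, c avoid the ideal I, hence are powers of y, hence commute, and then
   a c b = b c a, which is absurd. *)

Section Semigroup.
Variables (T : finType) (op : T -> T -> T).

Lemma gen_rees0 (u v : T) p :
  gen (reesop op set0) (pair2 (Some u) (Some v)) p ->
  exists2 g, p = Some g & gen op (pair2 u v) g.
Proof.
elim=> [a [->|->]|a b _ [g1 -> G1] _ [g2 -> G2]].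
- by exists u => //; apply: gen_base; left.
- by exists v => //; apply: gen_base; right.
- by exists (op g1 g2); [rewrite /= in_set0 | apply: gen_mul].
Qed.

Lemma nn_edge_rees0 (u v : T) :
  nn_edge (reesop op set0) (Some u) (Some v) -> nn_edge op u v.
Proof.
move=> not_nil [n [n_gt0 nil_n]]; apply: not_nil; exists n.
split=> // a' b' z Ga' Gb' Gz.
have [a -> Ga] := gen_rees0 Ga'; have [b -> Gb] := gen_rees0 Gb'.
pose z' i := if z i is Some (Some c) then Some c else None.
have Gz' i : in1 (gen op (pair2 u v)) (z' i).
  rewrite /z'; move: (Gz i); case: (z i) => [[c|]|] //=.
  by case/gen_rees0=> g [->].
have lamrho_Some k : lamrho (reesop op set0) (Some a) (Some b) z k =
    (Some (lamrho op a b z' k).1, Some (lamrho op a b z' k).2).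
  elim: k => [//|k IHk] /=; rewrite IHk /z'.
  move: (Gz k.+1); case: (z k.+1) => [[c|]|] /=.
  - by rewrite /reesop !in_set0.
  - by case/gen_rees0.
  - by rewrite /reesop !in_set0.
by rewrite lamrho_Some (nil_n a b z').
Qed.

Lemma lamrho_eq_stable x y z k d :
  (lamrho op x y z k).1 = (lamrho op x y z k).2 ->
  (lamrho op x y z (k + d)).1 = (lamrho op x y z (k + d)).2.
Proof. by move=> E; elim: d => [|d IHd]; rewrite ?addn0 // addnS /= IHd. Qed.

Lemma lamrho_neq_le x y z n k : k <= n ->
  (lamrho op x y z n).1 <> (lamrho op x y z n).2 ->
  (lamrho op x y z k).1 <> (lamrho op x y z k).2.
Proof.
by move=> le_kn neq_n E; apply: neq_n; rewrite -(subnKC le_kn) lamrho_eq_stable.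
Qed.

Lemma not_nilpotent_witness (P : T -> Prop) n : 0 < n -> ~ nilpotent op P ->
  exists a b z, [/\ P a, P b, forall i, in1 P (z i) &
    (lamrho op a b z n).1 <> (lamrho op a b z n).2].
Proof.
move=> n_gt0 not_nil; apply: NNPP => no_witness; apply: not_nil.
exists n; split=> // a b z Pa Pb Pz; apply: NNPP => neq_n.
by apply: no_witness; exists a, b, z.
Qed.

Lemma pseudo_nilpotent_edge x y z t m :
  pseudo_nilpotent op -> t < m ->
  (lamrho op x y z t).1 <> (lamrho op x y z t).2 ->
  lamrho op x y z t = lamrho op x y z m ->
  forall i, i <= m -> nn_edge op (lamrho op x y z i).1 (lamrho op x y z i).2.
Proof.
move=> pn lt_tm neq_t E_tm i le_im.
have ideal0 : is_ideal op (gen op (fun u => u = x \/ u = y \/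
    exists2 j, 0 < j <= m & z j = Some u)) set0.
  by split=> [u | u s]; rewrite in_set0.
have := pn x y m z set0 t ideal0 lt_tm neq_t E_tm
  (negbT (in_set0 _)) (negbT (in_set0 _)) i le_im.
by rewrite /rimg !in_set0; apply: nn_edge_rees0.
Qed.

End Semigroup.

Lemma nat_fun_repeat (T : finType) (f : nat -> T) :
  exists t m, [/\ t < m, m <= #|T| & f t = f m].
Proof.
pose g (k : 'I_#|T|.+1) := f k.
have : ~~ injectiveb g.
  apply/negP => /injectiveP inj_g.
  by have := leq_card g inj_g; rewrite card_ord ltnn.
case/injectivePn=> i [j neq_ij E_ij].
have le_ord (k : 'I_#|T|.+1) : k <= #|T| by rewrite -ltnS ltn_ord.
case: (ltngtP i j) => [lt_ij | lt_ji | eq_ij].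
- by exists i, j.
- by exists j, i.
- by move: neq_ij; rewrite (val_inj eq_ij) eqxx.
Qed.

Lemma non_nilpotent_edge (T : finType) (op : T -> T -> T) (P : T -> Prop) :
  pseudo_nilpotent op -> ~ nilpotent op P ->
  exists a b c, [/\ P a, P b, in1 P c, mul1 op a c b <> mul1 op b c a &
    nn_edge op (mul1 op a c b) (mul1 op b c a)].
Proof.
move=> pn not_nil; set N := #|{: T * T}|.
have [a [b [z [Pa Pb Pz neq_N]]]] := not_nilpotent_witness (n := N.+1) isT not_nil.
have [t [m [lt_tm le_mN E_tm]]] := nat_fun_repeat (lamrho op a b z).
have neq k : k <= N.+1 -> (lamrho op a b z k).1 <> (lamrho op a b z k).2.
  by move=> le_kN; apply: lamrho_neq_le neq_N.
have le_tN : t <= N.+1 by rewrite ltnW // ltnS (leq_trans (ltnW lt_tm)).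
exists a, b, (z 1); split=> //.
- exact: (neq 1).
- apply: (pseudo_nilpotent_edge pn lt_tm (neq t le_tN) E_tm (i := 1)).
  exact: leq_ltn_trans (leq0n t) lt_tm.
Qed.

Section IdealOfSemigroup.
Variables (T : finType) (op : T -> T -> T) (I : {set T}).
Hypothesis ideal_I : is_ideal op (fun _ => True) I.

Lemma ideal_mulr a s : a \in I -> op a s \in I.
Proof. by move=> aI; case: (ideal_I.2 a s aI). Qed.

Lemma ideal_mull a s : a \in I -> op s a \in I.
Proof. by move=> aI; case: (ideal_I.2 a s aI). Qed.

Lemma mul1_in_ideal a b c :
  [|| a \in I, b \in I | oapp (mem I) false c] -> mul1 op a c b \in I.
Proof.
case/or3P=> [aI | bI | ]; first by case: c => [c|] /=; do !apply: ideal_mulr.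
  by case: c => [c|] /=; apply: ideal_mull.
by case: c => //= c cI; apply/ideal_mulr/ideal_mull.
Qed.

Lemma gen_pair_notin_ideal x y g : x \in I ->
  gen op (pair2 x y) g -> g \notin I -> gen op (fun u => u = y) g.
Proof.
move=> xI; elim=> [u [->|->] | u v _ IHu _ IHv] uvI.
- by rewrite xI in uvI.
- exact: gen_base.
- apply: gen_mul; [apply: IHu | apply: IHv]; apply: contra uvI.
  + exact: ideal_mulr.
  + exact: ideal_mull.
Qed.

End IdealOfSemigroup.

Section Monogenic.
Variables (T : Type) (op : T -> T -> T) (y : T).
Hypothesis op_assoc : associative op.
Local Notation Y := (gen op (fun u => u = y)).

Lemma gen1_commy u : Y u -> op u y = op y u.
Proof.
elim=> [_ -> // | v w _ IHv _ IHw].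
by rewrite -op_assoc IHw op_assoc IHv op_assoc.
Qed.

Lemma gen1_comm u v : Y u -> Y v -> op u v = op v u.
Proof.
move=> Yu; elim=> [_ -> | w1 w2 _ IH1 _ IH2]; first exact: gen1_commy.
by rewrite op_assoc IH1 -op_assoc IH2 op_assoc.
Qed.

Lemma gen1_mul1_sym a b c : Y a -> Y b -> in1 Y c -> mul1 op a c b = mul1 op b c a.
Proof.
move=> Ya Yb; case: c => [c|] /= Yc; last exact: gen1_comm.
by rewrite (gen1_comm (gen_mul Ya Yc) Yb) (gen1_comm Ya Yc) op_assoc.
Qed.

End Monogenic.

Theorem lemma2p7 (T : finType) (op : T -> T -> T) (Hassoc : associative op)
  (Hpn : pseudo_nilpotent op) (I : {set T}) (HI : is_ideal op (fun _ => True) I)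
  (Hnoedge : forall x y : T, x \in I -> y \in I -> ~ nn_edge op x y) :
  forall x : T, x \in I -> forall y : T, ~ nn_edge op x y.
Proof.
move=> x xI y not_nil.
have [a [b [c [Ga Gb Gc neq_1 edge_1]]]] := non_nilpotent_edge Hpn not_nil.
have [abcI | ] := boolP [|| a \in I, b \in I | oapp (mem I) false c].
- apply: (Hnoedge _ _ _ _ edge_1); apply: (mul1_in_ideal HI); first exact: abcI.
  by rewrite orbCA.
- rewrite !negb_or => /and3P [aI bI cI].
  have toY g : gen op (pair2 x y) g -> g \notin I -> gen op (fun u => u = y) g.
    exact: gen_pair_notin_ideal.
  have Yc : in1 (gen op (fun u => u = y)) c.
    by case: c Gc cI {neq_1 edge_1} => //= c' Gc' c'I; apply: toY.
  apply: neq_1; apply: (gen1_mul1_sym Hassoc) Yc; exact: toY.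
Qed.
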